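(* Let $n\ge d\ge 1$. For $k=1,\dots,n$ let $\tilde Q_k=\begin{pmatrix}\mu_k&y_k^*\\ x_k&\tilde O_k\end{pmatrix}$ be a real orthogonal $(d+1)\times(d+1)$ matrix ($\mu_k\in\mathbb{R}$, $x_k,y_k\in\mathbb{R}^d$, $\tilde O_k\in\mathbb{R}^{d\times d}$), and let $$Q^{(k)}=\mathbb{I}_{k-1}\oplus\begin{pmatrix}\mu_k&0_{1,n-k}&y_k^*\\ 0_{n-k,1}&\mathbb{I}_{n-k}&0_{n-k,d}\\ x_k&0_{d,n-k}&\tilde O_k\end{pmatrix}\in\mathbb{R}^{(n+d)\times(n+d)}.$$ Define the $d\times n$ matrix $C$ and the $n\times n$ matrix $A$ by $$\begin{pmatrix} C\\ A\end{pmatrix}=Q^{(n)}Q^{(n-1)}\cdots Q^{(1)}\begin{pmatrix}\mathbb{I}_n\\ 0_{d,n}\end{pmatrix}.$$ Then $(A,C)$ is an OTSON pair.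
   Context: ${}^*$ denotes transpose. $(A,C)$ is OTSON if $A^*A=\mathbb{I}_n-C^*C$ and the stack $Q=\begin{pmatrix} C\\ A\end{pmatrix}$ satisfies $Q_{i,j}=0$ for $j>i$. *)

From mathcomp Require Import all_boot all_order all_algebra.
Unset Printing Implicit Defensive.
Import Order.TTheory GRing.Theory Num.Theory.
Local Open Scope ring_scope.

Definition orthogonal_mx {R : realFieldType} {m : nat} (Q : 'M[R]_m) : Prop :=
  Q^T *m Q = 1%:M.

Definition OTSON {R : realFieldType} {n d : nat} (A : 'M[R]_n) (C : 'M[R]_(d, n))
  : Prop :=
  A^T *m A = 1%:M - C^T *m C /\
  forall (i : 'I_(d + n)) (j : 'I_n), (i < j)%N -> (col_mx C A) i j = 0.

(* Position, inside the (d+1)x(d+1) matrix Qt_k, of the global index i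
   (0-based, 0 <= i < n+d) for the k-th factor (k0 = k-1 is 0-based):
   index k0 corresponds to the mu_k entry (position 0), indices n..n+d-1
   correspond to positions 1..d; all other indices are in identity blocks. *)
Definition Qpos (n d k0 i : nat) : option 'I_(1 + d) :=
  if i == k0 then Some (inord 0)
  else if (n <= i)%N then Some (inord (i - n).+1) else None.

(* Q^{(k)} = I_{k-1} (+) [[mu_k, 0, y_k^*], [0, I_{n-k}, 0], [x_k, 0, O_k]],
   written entrywise; k0 = k-1. *)
Definition Qbig {R : realFieldType} (n d k0 : nat) (Qt : 'M[R]_(1 + d))
  : 'M[R]_(n + d) :=
  \matrix_(i, j)
    match Qpos n d k0 i, Qpos n d k0 j with
    | Some a, Some b => Qt a b
    | None, None => (i == j)%:R
    | _, _ => 0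
    end.

(* Q^{(n)} ... Q^{(1)} [I_n ; 0_{d,n}], where Qt k0 is the factor for k = k0+1 *)
Definition stackQ {R : realFieldType} (n d : nat) (Qt : nat -> 'M[R]_(1 + d))
  : 'M[R]_(n + d, n) :=
  foldl (fun M k0 => Qbig n d k0 (Qt k0) *m M) (col_mx 1%:M 0) (iota 0 n).

Definition stackQ' {R : realFieldType} (n d : nat) (Qt : nat -> 'M[R]_(1 + d))
  : 'M[R]_(d + n, n) := castmx (addnC n d, erefl n) (stackQ n d Qt).

Definition Cmat {R : realFieldType} (n d : nat) (Qt : nat -> 'M[R]_(1 + d))
  : 'M[R]_(d, n) := usubmx (stackQ' n d Qt).
Definition Amat {R : realFieldType} (n d : nat) (Qt : nat -> 'M[R]_(1 + d))
  : 'M[R]_n := dsubmx (stackQ' n d Qt).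

From mathcomp Require Import all_boot all_order all_algebra.
Import GRing.Theory.
Local Open Scope ring_scope.

(* With 0-based indices, the factor [Qbig n d k (Qt k)] is Qt k acting on the
   coordinates k and n, ..., n+d-1 and the identity elsewhere. Such an
   embedding of square matrices is multiplicative and commutes with
   transposition, so every factor is orthogonal and the stack (C; A) has
   orthonormal columns, i.e. A^T A + C^T C = I. For the staircase shape, the
   factor k fixes the unit vectors e_j with j > k and the rows r < k: by
   induction, after the factors 0, ..., k-1 the columns j >= k are still e_j
   and no entry above the diagonal has become nonzero. *)

Section EmbedMx.
Context {R : pzRingType} {N m : nat} (f : 'I_N -> option 'I_m).

Definition embed_mx (A : 'M[R]_m) : 'M[R]_N :=
  \matrix_(i, j)
    match f i, f j with
    | Some a, Some b => A a b
    | None, None => (i == j)%:R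
    | _, _ => 0
    end.

Lemma trmx_embed_mx A : (embed_mx A)^T = embed_mx A^T.
Proof.
apply/matrixP => i j; rewrite !mxE eq_sym.
by case: (f i) => [a|]; case: (f j) => [b|]; rewrite ?mxE.
Qed.

Lemma row_embed_mx A i : f i = None -> row i (embed_mx A) = delta_mx 0 i.
Proof.
move=> fi; apply/rowP => j; rewrite !mxE fi eqxx /=.
case fj: (f j) => [b|]; last by rewrite eq_sym.
by case: eqP => // ji; rewrite ji fi in fj.
Qed.

Lemma col_embed_mx A j : f j = None -> col j (embed_mx A) = delta_mx j 0.
Proof.
by move=> fj; rewrite -[LHS]trmxK tr_col trmx_embed_mx row_embed_mx ?trmx_delta.
Qed.

Context {g : 'I_m -> 'I_N}.
Hypotheses (gK : pcancel g f) (fK : ocancel f g).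

Lemma embed_mx_idx {i a} : f i = Some a -> g a = i.
Proof. by move=> fi; have := fK i; rewrite fi. Qed.

Lemma sum_embed (F : 'I_m -> R) : \sum_l oapp F 0 (f l) = \sum_c F c.
Proof.
have perm_f : perm_eq (pmap f (index_enum 'I_N)) (index_enum 'I_m).
  apply: uniq_perm; first exact/(pmap_uniq fK)/index_enum_uniq.
    exact: index_enum_uniq.
  by move=> c; rewrite (can2_mem_pmap fK gK) !mem_index_enum.
by rewrite -(perm_big _ perm_f) big_pmap.
Qed.

Lemma embed_mx1 : embed_mx 1%:M = 1%:M.
Proof.
apply/matrixP => i j; rewrite !mxE.
case fi: (f i) => [a|]; case fj: (f j) => [b|] //.
- by rewrite mxE -(embed_mx_idx fi) -(embed_mx_idx fj) (inj_eq (pcan_inj gK)).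
- by case: eqP => // ij; rewrite ij fj in fi.
- by case: eqP => // ij; rewrite ij fj in fi.
Qed.

Lemma embed_mxM A B : embed_mx (A *m B) = embed_mx A *m embed_mx B.
Proof.
apply/row_matrixP => i; case fi: (f i) => [a|]; last first.
  by rewrite row_mul !row_embed_mx // -rowE row_embed_mx.
apply/rowP => j; rewrite !mxE fi.
under eq_bigr do rewrite !mxE fi.
case fj: (f j) => [b|]; last first.
  by rewrite big1 // => l _; case: (f l) => [c|]; rewrite ?mulr0 ?mul0r.
rewrite mxE -sum_embed; apply: eq_bigr => l _.
by case: (f l) => [c|]; rewrite ?mul0r.
Qed.

End EmbedMx.

Lemma orthogonal_embed_mx (R : realFieldType) N m (f : 'I_N -> option 'I_m)
    (g : 'I_m -> 'I_N) (Q : 'M[R]_m) :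
  pcancel g f -> ocancel f g -> orthogonal_mx Q -> orthogonal_mx (embed_mx f Q).
Proof.
move=> gK fK Q_orth.
rewrite /orthogonal_mx trmx_embed_mx -(embed_mxM _ gK fK) Q_orth.
exact: embed_mx1.
Qed.

Lemma trmx_foldl_orthogonal (R : realFieldType) (T : eqType) N p
    (P : T -> 'M[R]_N) (s : seq T) (M : 'M[R]_(N, p)) :
  {in s, forall k, orthogonal_mx (P k)} ->
  (foldl (fun M k => P k *m M) M s)^T *m foldl (fun M k => P k *m M) M s
    = M^T *m M.
Proof.
elim: s M => [|k s IHs] M //= PP.
rewrite IHs => [|x s_x]; last by apply: PP; rewrite inE s_x orbT.
by rewrite trmx_mul mulmxA -(mulmxA M^T) PP ?mem_head // mulmx1.
Qed.

Lemma trmx_mul_castmx_rows (R : pzRingType) p q n (e : p = q)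
    (S : 'M[R]_(p, n)) :
  (castmx (e, erefl n) S)^T *m castmx (e, erefl n) S = S^T *m S.
Proof. by case: q / e. Qed.

Lemma is_trig_castmx (R : nmodType) m1 n1 m2 n2 (e : (m1 = m2) * (n1 = n2))
    (A : 'M[R]_(m1, n1)) :
  is_trig_mx (castmx e A) = is_trig_mx A.
Proof.
by case: e => e1 e2; case: m2 / e1; case: n2 / e2; rewrite castmx_id.
Qed.

Lemma OTSON_col_mx (R : realFieldType) n d (A : 'M[R]_n) (C : 'M[R]_(d, n)) :
  (col_mx C A)^T *m col_mx C A = 1%:M -> is_trig_mx (col_mx C A) -> OTSON A C.
Proof.
rewrite tr_col_mx mul_row_col => CA_orth /is_trig_mxP CA_trig.
by split; rewrite // -CA_orth addrC addKr.
Qed.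

Definition trig_unit_cols {R : pzRingType} {n d : nat} (k : nat)
    (M : 'M[R]_(n + d, n)) : Prop :=
  is_trig_mx M /\
  forall j : 'I_n, (k <= j)%N -> col j M = delta_mx (lshift d j) 0.

Section Qbig.
Context {R : realFieldType} {n d : nat} (k : 'I_n).

Lemma Qidx_subproof (c : 'I_(1 + d)) :
  ((if c == 0 :> nat then k : nat else n + c.-1) < n + d)%N.
Proof. by case: c => [[|c] /= lt_c]; [exact: ltn_addr | rewrite ltn_add2l]. Qed.

Definition Qidx (c : 'I_(1 + d)) : 'I_(n + d) := Ordinal (Qidx_subproof c).

Lemma QidxK : pcancel Qidx (fun i => Qpos n d k i).
Proof.
case=> [[|c] lt_c]; rewrite /Qpos /=.
  by rewrite eqxx; congr Some; apply: val_inj; rewrite /= inordK.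
rewrite gtn_eqF ?ltn_addr // leq_addr addKn.
by congr Some; apply: val_inj; rewrite /= inordK.
Qed.

Lemma QposK : ocancel (fun i : 'I_(n + d) => Qpos n d k i) Qidx.
Proof.
move=> i; apply: val_inj; rewrite /Qpos.
case: eqP => [ik | _] /=; first by rewrite inordK ?ik.
case: (leqP n i) => //= le_n_i.
by rewrite inordK ?subnKC // ltnS ltn_subLR.
Qed.

Lemma orthogonal_Qbig (Q : 'M[R]_(1 + d)) :
  orthogonal_mx Q -> orthogonal_mx (Qbig n d k Q).
Proof. exact: orthogonal_embed_mx QidxK QposK. Qed.

Lemma Qpos_eq_None (r : 'I_(n + d)) :
  (r < n)%N -> r != k :> nat -> Qpos n d k r = None.
Proof. by move=> lt_rn /negbTE r_k; rewrite /Qpos r_k leqNgt lt_rn. Qed.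

Lemma trig_unit_cols_Qbig (Q : 'M[R]_(1 + d)) M :
  trig_unit_cols k M -> trig_unit_cols k.+1 (Qbig n d k Q *m M).
Proof.
move=> [/is_trig_mxP M_trig M_cols].
have QM_cols (j : 'I_n) :
    (k < j)%N -> col j (Qbig n d k Q *m M) = delta_mx (lshift d j) 0.
  move=> lt_kj; rewrite colE -mulmxA -colE M_cols 1?ltnW //.
  rewrite -colE col_embed_mx //.
  by apply: Qpos_eq_None => /=; [exact: ltn_ord | rewrite gtn_eqF].
split=> [|j]; last exact: QM_cols.
apply/is_trig_mxP => r j lt_rj; have [lt_kj | le_jk] := ltnP k j.
  have /colP/(_ r) := QM_cols j lt_kj; rewrite !mxE => ->.
  by rewrite -val_eqE /= ltn_eqF.
have Qr : Qpos n d k r = None.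
  apply: Qpos_eq_None; first exact: ltn_trans lt_rj (ltn_ord j).
  by rewrite ltn_eqF // (leq_trans lt_rj).
have /rowP/(_ j) : row r (Qbig n d k Q *m M) = row r M.
  by rewrite row_mul row_embed_mx // -rowE.
by rewrite !mxE => ->; apply: M_trig.
Qed.

End Qbig.

Section Stack.
Context {R : realFieldType} {n d : nat} (Qt : nat -> 'M[R]_(1 + d)).

Lemma trig_unit_cols_foldl k m (M : 'M[R]_(n + d, n)) :
  (k + m <= n)%N -> trig_unit_cols k M ->
  trig_unit_cols (k + m)
    (foldl (fun M k0 => Qbig n d k0 (Qt k0) *m M) M (iota k m)).
Proof.
elim: m k M => [|m IHm] k M le_kmn M_inv /=; first by rewrite addn0.
have lt_kn : (k < n)%N by rewrite (leq_trans _ le_kmn) // addnS ltnS leq_addr.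
rewrite -addSnnS; apply: IHm; first by rewrite addSnnS.
exact: trig_unit_cols_Qbig (Ordinal lt_kn) _ _ M_inv.
Qed.

Lemma trig_unit_cols0 : trig_unit_cols 0 (col_mx 1%:M 0 : 'M[R]_(n + d, n)).
Proof.
rewrite -pid_mx_col; split=> [|j _].
  by apply/is_trig_mxP => r j lt_rj; rewrite mxE ltn_eqF.
apply/colP => r; rewrite !mxE -val_eqE /= andbT.
by case: eqP => // ->; rewrite ltn_ord.
Qed.

Lemma stackQ_trig : is_trig_mx (stackQ n d Qt).
Proof. by have [] := trig_unit_cols_foldl 0 n _ (leqnn n) trig_unit_cols0. Qed.

Lemma stackQ_orthonormal_cols :
  (forall k, (k < n)%N -> orthogonal_mx (Qt k)) ->
  (stackQ n d Qt)^T *m stackQ n d Qt = 1%:M.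
Proof.
move=> Qt_orth; rewrite trmx_foldl_orthogonal => [|k].
  by rewrite tr_col_mx mul_row_col trmx1 mul1mx trmx0 mul0mx addr0.
rewrite mem_iota => /andP[_ lt_kn].
exact: orthogonal_Qbig (Ordinal lt_kn) _ (Qt_orth k lt_kn).
Qed.

End Stack.

Theorem corollary6p3 (R : realFieldType) (n d : nat)
  (hd : (1 <= d)%N) (hdn : (d <= n)%N)
  (Qt : nat -> 'M[R]_(1 + d))
  (hQt : forall k0 : nat, (k0 < n)%N -> orthogonal_mx (Qt k0)) :
  OTSON (Amat n d Qt) (Cmat n d Qt).
Proof.
have stackE : col_mx (Cmat n d Qt) (Amat n d Qt) = stackQ' n d Qt.
  by rewrite vsubmxK.
apply: OTSON_col_mx; rewrite stackE /stackQ'.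
  by rewrite trmx_mul_castmx_rows; apply: stackQ_orthonormal_cols.
by rewrite is_trig_castmx; apply: stackQ_trig.
Qed.
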